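(* Let $X,Y$ be compact metric spaces with metrics $d,d'$, and let $f\colon X\to X$, $g\colon Y\to Y$ be continuous maps. Let $C\in\mathcal{C}(f)$, $D\in\mathcal{D}(C)$, $C'\in\mathcal{C}(g)$, and let $h\colon C\to C'$ be a homeomorphism with $h\circ f|_C=g|_{C'}\circ h$ (then $h(D)\in\mathcal{D}(C')$). Let $\mathcal{F},\mathcal{G}$ be full Furstenberg families, $n\ge2$ and $\delta>0$. If $g$ has the s-limit shadowing property and $V^s(D)$ is dense $(\mathcal{F},\mathcal{G})$-$n$-$\delta$-chaotic for $f$, then there is $\delta'>0$ such that $V^s(h(D))$ is dense $(\mathcal{F},\mathcal{G})$-$n$-$\delta'$-chaotic for $g$.
   Context: The following is defined for any continuous self-map $f$ of a compact metric space $(X,d)$ (and analogously for $g$ on $(Y,d')$). A $\delta$-chain of $f$ ($\delta>0$) is a finite sequence $(x_i)_{i=0}^k$, $k\ge1$, with $d(f(x_i),x_{i+1})\le\delta$ for $0\le i\le k-1$; it is a $\delta$-cycle if $x_0=x_k$, with length $k$. Write $x\to y$ if for every $\delta>0$ there is a $\delta$-chain from $x$ to $y$. Let $CR(f)=\{x\colon x\to x\}$; on $CR(f)$ let $x\leftrightarrow y$ iff $x\to y$ and $y\to x$; its classes are the chain components, forming $\mathcal{C}(f)$. For $C\in\mathcal{C}(f)$, $\delta>0$, let $m=m(C,\delta)$ be the gcd of the lengths of all $\delta$-cycles of $f|_C$, and for $x,y\in C$ let $x\sim_{C,\delta}y$ iff there is a $\delta$-chain of $f|_C$ from $x$ to $y$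 of length divisible by $m$; $\mathcal{D}(C,\delta)$ is the set of its equivalence classes. Let $x\sim_C y$ iff $x\sim_{C,\delta}y$ for all $\delta>0$; $\mathcal{D}(C)$ is its set of classes. For $D\in\mathcal{D}(C)$, $D_\delta$ is the element of $\mathcal{D}(C,\delta)$ containing $D$. $W^s(C)=\{x\colon\lim_i d(f^i(x),C)=0\}$ and $V^s(D)=\bigcap_{\delta>0}\{x\in W^s(C)\colon\lim_i d(f^i(x),f^i(D_\delta))=0\}$. $g$ has the s-limit shadowing property if for every $\epsilon>0$ there is $\delta>0$ such that for every sequence $(y_i)_{i\ge0}$ with $d'(g(y_i),y_{i+1})\le\delta$ for all $i$ and $d'(g(y_i),y_{i+1})\to0$ there is $y\in Y$ with $d'(g^i(y),y_i)\le\epsilon$ for all $i$ and $d'(g^i(y),y_i)\to0$. A Furstenberg family is a nonempty proper family $\mathcal{F}\subsetneq 2^{\mathbb{N}_0}$ closed under taking supersets; it is full if $\{i\in A\colon i\ge n\}\in\mathcal{F}$ for all $A\in\mathcal{F}$, $n\ge0$. For $x_1,\dots,x_n\in X$, $r>0$: $S_f(x_1,\dots,x_n;r)=\{i\in\mathbb{N}_0\colon\min_{j<k}d(f^i(x_j),f^i(x_k))>r\}$ and $T_f(x_1,\dots,x_n;r)=\{i\in\mathbb{N}_0\colon\max_{j<k}d(f^i(x_j),f^i(x_k))<r\}$. $(x_1,\dots,x_n)$ is $(\mathcal{F},\mathcal{G})$-$\delta$-scrambled for $f$ if $S_f(x_1,\dots,x_n;\delta)\in\mathcal{F}$ and $T_f(x_1,\dots,x_n;\epsilon)\in\mathcal{G}$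 for all $\epsilon>0$. A nonempty $Z\subset X$ is dense $(\mathcal{F},\mathcal{G})$-$n$-$\delta$-chaotic for $f$ if the set of $(\mathcal{F},\mathcal{G})$-$\delta$-scrambled $n$-tuples in $Z^n$ is dense in $Z^n$ (analogously for $g$). *)

From Stdlib Require Import Reals List Arith.
Open Scope R_scope.
Set Implicit Arguments.

Section Defs.
Variables (X : Type) (d : X -> X -> R).

Definition iter (f : X -> X) (i : nat) (x : X) : X := Nat.iter i f x.

Definition is_metric : Prop :=
  (forall x y, 0 <= d x y) /\ (forall x y, d x y = 0 <-> x = y) /\
  (forall x y, d x y = d y x) /\ (forall x y z, d x z <= d x y + d y z).

Definition open_set (U : X -> Prop) : Prop :=
  forall x, U x -> exists r, 0 < r /\ forall y, d x y < r -> U y.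

Definition compact_space : Prop :=
  forall (I : Type) (U : I -> X -> Prop), (forall i, open_set (U i)) ->
    (forall x, exists i, U i x) ->
    exists l : list I, forall x, exists i, In i l /\ U i x.

Variable f : X -> X.

Definition chain (del : R) (xs : nat -> X) (k : nat) : Prop :=
  (1 <= k)%nat /\ forall i, (i < k)%nat -> d (f (xs i)) (xs (S i)) <= del.

Definition chain_rel (x y : X) : Prop :=
  forall del, 0 < del -> exists xs k, chain del xs k /\ xs 0%nat = x /\ xs k = y.

Definition CR (x : X) : Prop := chain_rel x x.

Definition chain_component (C : X -> Prop) : Prop :=
  exists x, CR x /\ forall y, C y <-> (CR y /\ chain_rel x y /\ chain_rel y x).

Definition chain_in (C : X -> Prop) (del : R) (xs : nat -> X) (k : nat) : Prop :=
  chain del xs k /\ forall i, (i <= k)%nat -> C (xs i).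

Definition cycle_length_in (C : X -> Prop) (del : R) (k : nat) : Prop :=
  exists xs, chain_in C del xs k /\ xs 0%nat = xs k.

Definition is_cycle_gcd (C : X -> Prop) (del : R) (m : nat) : Prop :=
  (forall k, cycle_length_in C del k -> Nat.divide m k) /\
  (forall m', (forall k, cycle_length_in C del k -> Nat.divide m' k) -> Nat.divide m' m).

Definition sim_Cd (C : X -> Prop) (del : R) (x y : X) : Prop :=
  C x /\ C y /\ exists m, is_cycle_gcd C del m /\
    exists xs k, chain_in C del xs k /\ xs 0%nat = x /\ xs k = y /\ Nat.divide m k.

Definition sim_C (C : X -> Prop) (x y : X) : Prop :=
  forall del, 0 < del -> sim_Cd C del x y.

Definition D_class (C D : X -> Prop) : Prop :=
  exists x, C x /\ forall y, D y <-> (C y /\ sim_C C x y).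

(* D_delta : the element of D(C,delta) containing D *)
Definition D_delta (C D : X -> Prop) (del : R) (y : X) : Prop :=
  C y /\ exists x, D x /\ sim_Cd C del x y.

(* W^s(C): lim d(f^i x, C) = 0, with d(p,C) < eps iff some c in C has d(p,c) < eps *)
Definition Ws (C : X -> Prop) (x : X) : Prop :=
  forall eps, 0 < eps -> exists N, forall i, (N <= i)%nat ->
    exists c, C c /\ d (iter f i x) c < eps.

Definition Vs (C D : X -> Prop) (x : X) : Prop :=
  forall del, 0 < del -> Ws C x /\
    forall eps, 0 < eps -> exists N, forall i, (N <= i)%nat ->
      exists y, D_delta C D del y /\ d (iter f i x) (iter f i y) < eps.

(* S_f(x_1,...,x_n; r) and T_f(x_1,...,x_n; r); tuples indexed by 0..n-1 *)
Definition S_set (n : nat) (xs : nat -> X) (r : R) (i : nat) : Prop :=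
  forall j k, (j < k)%nat -> (k < n)%nat -> r < d (iter f i (xs j)) (iter f i (xs k)).

Definition T_set (n : nat) (xs : nat -> X) (r : R) (i : nat) : Prop :=
  forall j k, (j < k)%nat -> (k < n)%nat -> d (iter f i (xs j)) (iter f i (xs k)) < r.

Definition scrambled (F G : (nat -> Prop) -> Prop) (n : nat) (del : R) (xs : nat -> X) : Prop :=
  F (S_set n xs del) /\ forall eps, 0 < eps -> G (T_set n xs eps).

Definition dense_chaotic (F G : (nat -> Prop) -> Prop) (n : nat) (del : R) (Z : X -> Prop) : Prop :=
  (exists z, Z z) /\
  forall zs : nat -> X, (forall j, (j < n)%nat -> Z (zs j)) ->
    forall eps, 0 < eps -> exists ws : nat -> X,
      (forall j, (j < n)%nat -> Z (ws j)) /\ scrambled F G n del ws /\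
      (forall j, (j < n)%nat -> d (ws j) (zs j) < eps).

End Defs.

Definition continuous_map {X Y : Type} (d : X -> X -> R) (d' : Y -> Y -> R) (f : X -> Y) : Prop :=
  forall x eps, 0 < eps -> exists del, 0 < del /\ forall y, d x y < del -> d' (f x) (f y) < eps.

Definition homeo_on {X Y : Type} (d : X -> X -> R) (d' : Y -> Y -> R)
  (C : X -> Prop) (C' : Y -> Prop) (h : X -> Y) : Prop :=
  (forall x, C x -> C' (h x)) /\
  (forall x x', C x -> C x' -> h x = h x' -> x = x') /\
  (forall y, C' y -> exists x, C x /\ h x = y) /\
  (forall x eps, C x -> 0 < eps -> exists del, 0 < del /\
     forall x', C x' -> d x x' < del -> d' (h x) (h x') < eps) /\
  (forall x eps, C x -> 0 < eps -> exists del, 0 < del /\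
     forall x', C x' -> d' (h x) (h x') < del -> d x x' < eps).

Definition image {X Y : Type} (h : X -> Y) (D : X -> Prop) (y : Y) : Prop :=
  exists x, D x /\ h x = y.

Definition s_limit_shadowing {Y : Type} (d' : Y -> Y -> R) (g : Y -> Y) : Prop :=
  forall eps, 0 < eps -> exists del, 0 < del /\
    forall ys : nat -> Y,
      (forall i, d' (g (ys i)) (ys (S i)) <= del) ->
      (forall eta, 0 < eta -> exists N, forall i, (N <= i)%nat -> d' (g (ys i)) (ys (S i)) < eta) ->
      exists y, (forall i, d' (iter g i y) (ys i) <= eps) /\
        (forall eta, 0 < eta -> exists N, forall i, (N <= i)%nat -> d' (iter g i y) (ys i) < eta).

Definition furstenberg (F : (nat -> Prop) -> Prop) : Prop :=
  (exists A, F A) /\ (exists A, ~ F A) /\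
  (forall A B : nat -> Prop, F A -> (forall i, A i -> B i) -> F B).

Definition full_family (F : (nat -> Prop) -> Prop) : Prop :=
  forall (A : nat -> Prop) (n : nat), F A -> F (fun i => A i /\ (n <= i)%nat).

(* The conjugacy [h] transports the chain structure of [f] on [C] to that of
   [g] on [C']: chains, gcds of cycle lengths and the classes [D_delta]
   correspond, with the chain sizes related through the uniform continuity of
   [h] and of its inverse on the compact sets [C] and [C'].
   Fix one scrambled tuple [xs] in [V^s(D)]; every orbit of [xs j] is
   asymptotic to a sequence [cs j] in [C].  Given a point [z] of [V^s(h(D))],
   consider the pseudo-orbit that follows [z] for [N] steps, jumps into [C']
   near [g^N z], crosses [C'] along a chain of length exactly [K - N] (possible
   because both endpoints have the right phase modulo the cycle gcd), and then
   follows [h (cs j i)].  By s-limit shadowing it is traced by a point [w] close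
   to [z] and asymptotic to [h (cs j i)], hence [w] lies in [V^s(h(D))].  The
   points [w] so obtained form a scrambled tuple, with a constant [del'] that
   depends only on [del] through the uniform continuity of [h^-1]. *)

From Pilot Require Import Defs.
From Stdlib Require Import Reals Lra Lia List Arith Classical ClassicalEpsilon.
Open Scope R_scope.
Set Implicit Arguments.

Definition eventually (P : nat -> Prop) : Prop :=
  exists N, forall i, (N <= i)%nat -> P i.

Lemma eventually_and (P Q : nat -> Prop) :
  eventually P -> eventually Q -> eventually (fun i => P i /\ Q i).
Proof.
  intros [M HM] [N HN]. exists (M + N)%nat. intros i Hi.
  split; [apply HM | apply HN]; lia.
Qed.

Lemma eventually_forall_lt (n : nat) (P : nat -> nat -> Prop) :
  (forall j, (j < n)%nat -> eventually (P j)) ->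
  eventually (fun i => forall j, (j < n)%nat -> P j i).
Proof.
  induction n as [|n IH]; intros H.
  - exists 0%nat. intros; lia.
  - destruct (eventually_and (IH (fun j Hj => H j ltac:(lia))) (H n ltac:(lia))) as [N HN].
    exists N. intros i Hi j Hj. destruct (HN i Hi) as [Hlt Hn].
    destruct (Nat.eq_dec j n) as [->|Hne]; auto. apply Hlt; lia.
Qed.

Lemma family_eventually_mono {F : (nat -> Prop) -> Prop} {A E B : nat -> Prop} :
  furstenberg F -> full_family F -> F A -> eventually E ->
  (forall i, A i -> E i -> B i) -> F B.
Proof.
  intros [_ [_ Hup]] Hfull HA [N HN] HAB.
  apply (Hup _ _ (Hfull A N HA)). intros i [HAi Hi]. apply HAB; auto.
Qed.

Lemma choice_below (A : Type) (n : nat) (P : nat -> A -> Prop) :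
  inhabited A -> (forall j, (j < n)%nat -> exists a, P j a) ->
  exists u : nat -> A, forall j, (j < n)%nat -> P j (u j).
Proof.
  intros [a0] H.
  apply (choice (fun j a => (j < n)%nat -> P j a)). intros j.
  destruct (lt_dec j n) as [Hj|Hj].
  - destruct (H j Hj) as [a Ha]. exists a; auto.
  - exists a0. intros; contradiction.
Qed.

Lemma list_min_pos (A : Type) (r : A -> R) (l : list A) :
  (forall a, In a l -> 0 < r a) -> exists m, 0 < m /\ forall a, In a l -> m <= r a.
Proof.
  induction l as [|a l IH]; intros H.
  - exists 1. split; [lra | intros a []].
  - destruct IH as [m [Hm Hmin]]. { intros b Hb. apply H. right; exact Hb. }
    exists (Rmin m (r a)). split.
    + apply Rmin_glb_lt; auto. apply H. left; reflexivity.
    + intros b [<-|Hb]; [apply Rmin_r|].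
      apply Rle_trans with m; [apply Rmin_l | auto].
Qed.

Lemma list_bound (A : Type) (P : A -> nat -> Prop) (l : list A) :
  (forall a, In a l -> exists k, P a k) ->
  exists M, forall a, In a l -> exists k, (k <= M)%nat /\ P a k.
Proof.
  induction l as [|a l IH]; intros H.
  - exists 0%nat. intros b [].
  - destruct IH as [M HM]. { intros b Hb. apply H. right; exact Hb. }
    destruct (H a (or_introl eq_refl)) as [k Hk].
    exists (Nat.max k M). intros b [<-|Hb].
    + exists k. split; [lia | exact Hk].
    + destruct (HM b Hb) as [k' [Hk' HP]]. exists k'. split; [lia | exact HP].
Qed.

Definition asymptotic (X : Type) (d : X -> X -> R) (u v : nat -> X) : Prop :=
  forall eps, 0 < eps -> eventually (fun i => d (u i) (v i) < eps).

Section Metric.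
Variables (X : Type) (d : X -> X -> R).
Hypothesis Hm : is_metric d.

Lemma dist_nonneg x y : 0 <= d x y.
Proof. apply Hm. Qed.

Lemma dist_self x : d x x = 0.
Proof. apply Hm. reflexivity. Qed.

Lemma dist_sym x y : d x y = d y x.
Proof. apply Hm. Qed.

Lemma dist_triangle x y z : d x z <= d x y + d y z.
Proof. apply Hm. Qed.

(* [Defs.open_set], not the [open_set] of [Rtopology] on [R]. *)
Lemma ball_open c r : Defs.open_set d (fun x => d c x < r).
Proof.
  intros x Hx. exists (r - d c x). split; [lra|].
  intros y Hy. pose proof (dist_triangle c x y). lra.
Qed.

End Metric.

Section Compactness.
Variables (X : Type) (d : X -> X -> R).
Hypotheses (Hm : is_metric d) (Hc : compact_space d).

Definition closed (K : X -> Prop) : Prop :=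
  forall x, ~ K x -> exists r, 0 < r /\ forall y, d x y < r -> ~ K y.

Lemma ball_cover_fin (I : Type) (c : I -> X) (r : I -> R) :
  (forall x, exists i, d (c i) x < r i) ->
  exists l : list I, forall x, exists i, In i l /\ d (c i) x < r i.
Proof.
  intros Hcov. apply (Hc (fun i x => d (c i) x < r i)); auto.
  intros i. apply ball_open, Hm.
Qed.

Lemma closed_ball_cover_fin (K : X -> Prop) (r : X -> R) :
  closed K -> (forall x, 0 < r x) ->
  exists l : list X, forall y, K y -> exists q, In q l /\ K q /\ d q y < r q.
Proof.
  intros HK Hr.
  destruct (choice (fun x rho => 0 < rho /\ (K x -> rho = r x) /\
                      (~ K x -> forall y, d x y < rho -> ~ K y))) as [rho Hrho].
  { intros x. destruct (classic (K x)) as [Kx|Kx].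
    - exists (r x). repeat split; auto; contradiction.
    - destruct (HK x Kx) as [s [Hs Hball]]. exists s. repeat split; auto; contradiction. }
  destruct (ball_cover_fin (fun x => x) rho) as [l Hl].
  { intros x. exists x. rewrite (dist_self Hm). apply Hrho. }
  exists l. intros y Ky. destruct (Hl y) as [q [Hq Hqy]].
  destruct (Hrho q) as [_ [HrK HrN]].
  destruct (classic (K q)) as [Kq|Kq].
  - exists q. rewrite <- HrK; auto.
  - exfalso. exact (HrN Kq y Hqy Ky).
Qed.

Lemma uniform_on_closed (K : X -> Prop) (Q : X -> X -> Prop) :
  closed K ->
  (forall x, K x -> exists r, 0 < r /\
     forall y1 y2, K y1 -> K y2 -> d x y1 < r -> d x y2 < r -> Q y1 y2) ->
  exists r, 0 < r /\ forall y1 y2, K y1 -> K y2 -> d y1 y2 < r -> Q y1 y2.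
Proof.
  intros HK Hloc.
  destruct (choice (fun x r => 0 < r /\ (K x -> forall y1 y2, K y1 -> K y2 ->
                      d x y1 < r -> d x y2 < r -> Q y1 y2))) as [rho Hrho].
  { intros x. destruct (classic (K x)) as [Kx|Kx].
    - destruct (Hloc x Kx) as [r [Hr HQ]]. exists r. auto.
    - exists 1. split; [lra | contradiction]. }
  destruct (closed_ball_cover_fin (fun x => rho x / 2) HK) as [l Hl].
  { intros x. destruct (Hrho x). lra. }
  destruct (list_min_pos (fun x => rho x / 2) l) as [m [Hm_pos Hmin]].
  { intros x _. destruct (Hrho x). lra. }
  exists m. split; auto. intros y1 y2 K1 K2 H12.
  destruct (Hl y1 K1) as [q [Hq [Kq Hqy]]].
  destruct (Hrho q) as [_ HQ]. specialize (Hmin q Hq).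
  apply (HQ Kq); auto; [lra|].
  pose proof (dist_triangle Hm q y1 y2). lra.
Qed.

Lemma uniform_continuous_on (Y : Type) (d' : Y -> Y -> R) (K : X -> Prop) (phi : X -> Y) :
  is_metric d' -> closed K ->
  (forall x eps, K x -> 0 < eps -> exists del, 0 < del /\
     forall x', K x' -> d x x' < del -> d' (phi x) (phi x') < eps) ->
  forall eps, 0 < eps -> exists r, 0 < r /\
    forall y1 y2, K y1 -> K y2 -> d y1 y2 < r -> d' (phi y1) (phi y2) < eps.
Proof.
  intros Hm' HK Hphi eps He.
  apply (uniform_on_closed (fun y1 y2 => d' (phi y1) (phi y2) < eps) HK).
  intros x Kx. destruct (Hphi x (eps/2) Kx ltac:(lra)) as [r [Hr Hball]].
  exists r. split; auto. intros y1 y2 K1 K2 H1 H2.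
  pose proof (Hball y1 K1 H1). pose proof (Hball y2 K2 H2).
  pose proof (dist_triangle Hm' (phi y1) (phi x) (phi y2)).
  rewrite (dist_sym Hm' (phi y1) (phi x)) in *. lra.
Qed.

Lemma continuous_uniform (f : X -> X) :
  continuous_map d d f ->
  forall eps, 0 < eps -> exists r, 0 < r /\ forall y1 y2, d y1 y2 < r -> d (f y1) (f y2) < eps.
Proof.
  intros Hf eps He.
  destruct (@uniform_continuous_on X d (fun _ => True) f Hm) with eps as [r [Hr Hu]]; auto.
  - intros x Hx. exfalso; auto.
  - intros x e _ He'. destruct (Hf x e He') as [r [Hr Hball]]. exists r. auto.
  - exists r. auto.
Qed.

Lemma cluster_point (P : R -> X -> Prop) :
  (forall e1 e2 p, e1 <= e2 -> P e1 p -> P e2 p) ->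
  (forall eps, 0 < eps -> exists p, P eps p) ->
  exists z, forall r eps, 0 < r -> 0 < eps -> exists p, d z p < r /\ P eps p.
Proof.
  intros Hmono Hne. apply NNPP. intros Hno.
  destruct (choice (fun z (re : R * R) => 0 < fst re /\ 0 < snd re /\
                      forall p, d z p < fst re -> ~ P (snd re) p)) as [rho Hrho].
  { intros z. apply NNPP. intros Hz. apply Hno. exists z. intros r eps Hr He.
    apply NNPP. intros Hp. apply Hz. exists (r, eps). simpl. repeat split; auto.
    intros p Hzp HP. apply Hp. exists p; auto. }
  destruct (ball_cover_fin (fun z => z) (fun z => fst (rho z))) as [l Hl].
  { intros x. exists x. rewrite (dist_self Hm). apply Hrho. }
  destruct (list_min_pos (fun z => snd (rho z)) l) as [m [Hm_pos Hmin]].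
  { intros z _. apply Hrho. }
  destruct (Hne m Hm_pos) as [p Hp].
  destruct (Hl p) as [z [Hz Hzp]].
  destruct (Hrho z) as [_ [_ Hfar]].
  exact (Hfar p Hzp (Hmono _ _ _ (Hmin z Hz) Hp)).
Qed.

End Compactness.

Section Chains.
Variables (X : Type) (d : X -> X -> R) (f : X -> X).
Hypothesis Hm : is_metric d.

Definition chain_between (P : X -> Prop) (del : R) (a b : X) (k : nat) : Prop :=
  exists xs, chain_in d f P del xs k /\ xs 0%nat = a /\ xs k = b.

Lemma chain_between_len P del a b k : chain_between P del a b k -> (1 <= k)%nat.
Proof. intros [xs [[[Hk _] _] _]]. exact Hk. Qed.

Lemma chain_between_ends P del a b k : chain_between P del a b k -> P a /\ P b.
Proof. intros [xs [[_ HP] [<- <-]]]. split; apply HP; lia. Qed.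

Lemma chain_between_cat P del a b c k1 k2 :
  chain_between P del a b k1 -> chain_between P del b c k2 ->
  chain_between P del a c (k1 + k2).
Proof.
  intros [xs [[[Hk1 Hx] Px] [Hx0 Hxk]]] [ys [[[Hk2 Hy] Py] [Hy0 Hyk]]].
  set (zs := fun i => if Nat.leb i k1 then xs i else ys (i - k1)%nat).
  assert (Zl : forall i, (i <= k1)%nat -> zs i = xs i).
  { intros i Hi. unfold zs. rewrite (proj2 (Nat.leb_le i k1) Hi). reflexivity. }
  assert (Zr : forall i, (k1 <= i)%nat -> zs i = ys (i - k1)%nat).
  { intros i Hi. unfold zs. destruct (Nat.leb_spec i k1); [|reflexivity].
    replace i with k1 by lia. rewrite Nat.sub_diag, Hy0, Hxk. reflexivity. }
  exists zs. split; [split; [split|] | split].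
  - lia.
  - intros i Hi. destruct (Nat.lt_ge_cases i k1).
    + rewrite Zl, Zl by lia. apply Hx; lia.
    + rewrite Zr, Zr by lia. replace (S i - k1)%nat with (S (i - k1)) by lia. apply Hy; lia.
  - intros i Hi. destruct (Nat.le_gt_cases i k1).
    + rewrite Zl by lia. apply Px; lia.
    + rewrite Zr by lia. apply Py; lia.
  - rewrite Zl by lia. exact Hx0.
  - rewrite Zr by lia. replace (k1 + k2 - k1)%nat with k2 by lia. exact Hyk.
Qed.

Lemma chain_between_le P del del' a b k :
  del <= del' -> chain_between P del a b k -> chain_between P del' a b k.
Proof.
  intros Hle [xs [[[Hk Hx] Px] E]]. exists xs. split; [split; [split|] | exact E]; auto.
  intros i Hi. specialize (Hx i Hi). lra.
Qed.

Lemma chain_between_set_last P del e a b b' k :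
  chain_between P del a b k -> P b' -> d b b' <= e -> chain_between P (del + e) a b' k.
Proof.
  intros [xs [[[Hk Hx] Px] [E0 Ek]]] Pb' Hbb'.
  exists (fun i => if Nat.eqb i k then b' else xs i).
  split; [split; [split|] | split].
  - exact Hk.
  - intros i Hi. rewrite (proj2 (Nat.eqb_neq i k)) by lia. pose proof (Hx i Hi).
    destruct (Nat.eqb_spec (S i) k) as [Heq|_].
    + rewrite Heq, Ek in *. pose proof (dist_triangle Hm (f (xs i)) b b'). lra.
    + pose proof (dist_nonneg Hm b b'). lra.
  - intros i Hi. destruct (Nat.eqb i k); auto.
  - rewrite (proj2 (Nat.eqb_neq 0 k)) by lia. exact E0.
  - rewrite Nat.eqb_refl. reflexivity.
Qed.

Lemma chain_between_set_first P del e a a' b k :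
  chain_between P del a b k -> P a' -> d (f a') (f a) <= e -> chain_between P (del + e) a' b k.
Proof.
  intros [xs [[[Hk Hx] Px] [E0 Ek]]] Pa' Haa'.
  exists (fun i => if Nat.eqb i 0 then a' else xs i).
  split; [split; [split|] | split].
  - exact Hk.
  - intros i Hi. simpl. pose proof (Hx i Hi). destruct (Nat.eqb_spec i 0) as [->|_].
    + rewrite E0 in *. pose proof (dist_triangle Hm (f a') (f a) (xs 1%nat)). lra.
    + pose proof (dist_nonneg Hm (f a') (f a)). lra.
  - intros i Hi. destruct (Nat.eqb i 0); auto.
  - reflexivity.
  - rewrite (proj2 (Nat.eqb_neq k 0)) by lia. exact Ek.
Qed.

Lemma chain_between_orbit P del a t :
  0 <= del -> (forall x, P x -> P (f x)) -> P a -> (1 <= t)%nat ->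
  chain_between P del a (iter f t a) t.
Proof.
  intros Hdel Hinv Pa Ht. exists (fun i => iter f i a).
  split; [split; [split|] | split]; auto.
  - intros i _. change (iter f (S i) a) with (f (iter f i a)). rewrite (dist_self Hm). exact Hdel.
  - intros i _. induction i; simpl; auto.
Qed.

Lemma chain_between_drop_first P del a b k :
  chain_between P del a b k -> (2 <= k)%nat ->
  exists p, d (f a) p <= del /\ chain_between P del p b (k - 1).
Proof.
  intros [xs [[[Hk Hx] Px] [E0 Ek]]] H2. exists (xs 1%nat). split.
  - rewrite <- E0. apply Hx. lia.
  - exists (fun i => xs (S i)). split; [split; [split|] | split].
    + lia.
    + intros i Hi. apply Hx. lia.
    + intros i Hi. apply Px. lia.
    + reflexivity.
    + replace (S (k - 1)) with k by lia. exact Ek.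
Qed.

Lemma chain_of_nearby (P : X -> Prop) (del th eta : R) xs k :
  0 < th -> chain d f del xs k -> P (xs 0%nat) -> P (xs k) ->
  (forall y1 y2, d y1 y2 < th -> d (f y1) (f y2) < eta) ->
  (forall i, (0 < i < k)%nat -> exists c, P c /\ d (xs i) c < th) ->
  chain_between P (eta + del + th) (xs 0%nat) (xs k) k.
Proof.
  intros Hth [Hk Hx] P0 Pk Hunif Hnear.
  destruct (choice (fun i c => P c /\ ((i <= k)%nat -> d (xs i) c < th) /\
                      ((i = 0 \/ i = k)%nat -> c = xs i))) as [cs Hcs].
  { intros i. destruct (classic (i = 0 \/ i = k)%nat) as [Hend|Hmid].
    - exists (xs i). split; [destruct Hend as [-> | ->]; auto|].
      split; auto. intros _. rewrite (dist_self Hm). exact Hth.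
    - destruct (le_lt_dec i k).
      + destruct (Hnear i ltac:(lia)) as [c [Pc Hc]]. exists c. repeat split; auto.
        intros; contradiction.
      + exists (xs 0%nat). repeat split; auto; intros; lia. }
  exists cs. split; [split; [split|] | split].
  - exact Hk.
  - intros i Hi.
    destruct (Hcs i) as [_ [Hi1 _]]. destruct (Hcs (S i)) as [_ [Hi2 _]].
    specialize (Hi1 ltac:(lia)). specialize (Hi2 ltac:(lia)).
    assert (d (f (cs i)) (f (xs i)) < eta) by (apply Hunif; rewrite (dist_sym Hm); exact Hi1).
    pose proof (Hx i Hi).
    pose proof (dist_triangle Hm (f (cs i)) (f (xs i)) (cs (S i))).
    pose proof (dist_triangle Hm (f (xs i)) (xs (S i)) (cs (S i))). lra.
  - intros i _. apply Hcs.
  - apply Hcs. left; reflexivity.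
  - apply Hcs. right; reflexivity.
Qed.

Lemma chain_rel_iff a b :
  chain_rel d f a b <-> forall del, 0 < del -> exists k, chain_between (fun _ => True) del a b k.
Proof.
  split.
  - intros H del Hd. destruct (H del Hd) as [xs [k [Hch E]]].
    exists k, xs. repeat split; apply Hch || apply E.
  - intros H del Hd. destruct (H del Hd) as [k [xs [[Hch _] E]]].
    exists xs, k. split; auto.
Qed.

Lemma chain_rel_trans a b c : chain_rel d f a b -> chain_rel d f b c -> chain_rel d f a c.
Proof.
  rewrite !chain_rel_iff. intros H1 H2 del Hd.
  destruct (H1 del Hd) as [k1 C1]. destruct (H2 del Hd) as [k2 C2].
  exists (k1 + k2)%nat. exact (chain_between_cat C1 C2).
Qed.

Definition on_chain (del : R) (a b p : X) : Prop :=
  exists xs k i, chain d f del xs k /\ xs 0%nat = a /\ xs k = b /\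
    (0 < i < k)%nat /\ xs i = p.

Lemma on_chain_le del del' a b p : del <= del' -> on_chain del a b p -> on_chain del' a b p.
Proof.
  intros Hle [xs [k [i [[Hk Hx] Hrest]]]]. exists xs, k, i. repeat split; try apply Hrest; auto.
  intros j Hj. specialize (Hx j Hj). lra.
Qed.

Lemma on_chain_split del a b p : on_chain del a b p ->
  (exists k, chain_between (fun _ => True) del a p k) /\
  (exists k, chain_between (fun _ => True) del p b k).
Proof.
  intros [xs [k [i [[Hk Hx] [E0 [Ek [Hi Ei]]]]]]]. split.
  - exists i, xs. repeat split; auto; try lia. intros j Hj. apply Hx. lia.
  - exists (k - i)%nat, (fun j => xs (i + j)%nat). repeat split; auto; try lia.
    + intros j Hj. replace (i + S j)%nat with (S (i + j)) by lia. apply Hx. lia.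
    + rewrite Nat.add_0_r. exact Ei.
    + replace (i + (k - i))%nat with k by lia. exact Ek.
Qed.

Section Continuous.
Hypothesis Hf : continuous_map d d f.
Arguments Hf : clear implicits.

Lemma chain_rel_to_limit a z :
  (forall r eta, 0 < r -> 0 < eta ->
     exists c k, d z c < r /\ chain_between (fun _ => True) eta a c k) ->
  chain_rel d f a z.
Proof.
  intros Hnear. apply chain_rel_iff. intros eta Heta.
  destruct (Hnear (eta/2) (eta/2) ltac:(lra) ltac:(lra)) as [c [k [Hzc Hch]]].
  exists k. apply chain_between_le with (eta/2 + eta/2); [lra|].
  apply chain_between_set_last with c; auto. rewrite (dist_sym Hm). lra.
Qed.

Lemma chain_rel_from_limit z b :
  (forall r eta, 0 < r -> 0 < eta ->
     exists c k, d z c < r /\ chain_between (fun _ => True) eta c b k) ->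
  chain_rel d f z b.
Proof.
  intros Hnear. apply chain_rel_iff. intros eta Heta.
  destruct (Hf z (eta/2) ltac:(lra)) as [rho [Hrho Hcont]].
  destruct (Hnear rho (eta/2) Hrho ltac:(lra)) as [c [k [Hzc Hch]]].
  exists k. apply chain_between_le with (eta/2 + eta/2); [lra|].
  apply chain_between_set_first with c; auto. specialize (Hcont c Hzc). lra.
Qed.

Lemma chain_rel_through_cluster a b z :
  (forall r eta, 0 < r -> 0 < eta -> exists p, d z p < r /\ on_chain eta a b p) ->
  chain_rel d f a z /\ chain_rel d f z b.
Proof.
  intros Hz. split.
  - apply chain_rel_to_limit. intros r eta Hr Heta.
    destruct (Hz r eta Hr Heta) as [p [Hzp Hp]].
    destruct (on_chain_split Hp) as [[k Hk] _]. exists p, k. auto.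
  - apply chain_rel_from_limit. intros r eta Hr Heta.
    destruct (Hz r eta Hr Heta) as [p [Hzp Hp]].
    destruct (on_chain_split Hp) as [_ [k Hk]]. exists p, k. auto.
Qed.

End Continuous.

Lemma pseudo_orbit_glue (P : X -> Prop) (z a b : X) (N K : nat) (beta : R) (t : nat -> X) :
  (1 <= N)%nat -> d (iter f N z) a <= beta -> chain_between P beta a b (K - N) ->
  t K = b -> (forall i, (K <= i)%nat -> d (f (t i)) (t (S i)) <= beta) ->
  exists ys : nat -> X, ys 0%nat = z /\ (forall i, d (f (ys i)) (ys (S i)) <= beta) /\
    (forall i, (K <= i)%nat -> ys i = t i).
Proof.
  intros HN Ha Hab Ht Htail.
  pose proof (chain_between_len Hab) as Hlen.
  destruct Hab as [xs [[[_ Hxs] _] [E0 Ek]]].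
  assert (Hbeta : 0 <= beta) by (pose proof (dist_nonneg Hm (iter f N z) a); lra).
  set (ys := fun i => if Nat.ltb i N then iter f i z
                      else if Nat.leb i K then xs (i - N)%nat else t i).
  assert (Y1 : forall i, (i < N)%nat -> ys i = iter f i z).
  { intros i Hi. unfold ys. rewrite (proj2 (Nat.ltb_lt i N) Hi). reflexivity. }
  assert (Y2 : forall i, (N <= i <= K)%nat -> ys i = xs (i - N)%nat).
  { intros i Hi. unfold ys.
    rewrite (proj2 (Nat.ltb_ge i N)), (proj2 (Nat.leb_le i K)) by lia. reflexivity. }
  assert (Y3 : forall i, (K <= i)%nat -> ys i = t i).
  { intros i Hi. destruct (Nat.eq_dec i K) as [->|Hne].
    - rewrite Y2, Ht by lia. exact Ek.
    - unfold ys. rewrite (proj2 (Nat.ltb_ge i N)), (proj2 (Nat.leb_gt i K)) by lia.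
      reflexivity. }
  exists ys. split; [|split; [|exact Y3]].
  - apply Y1. lia.
  - intros i. destruct (lt_dec (S i) N) as [H1|H1]; [|destruct (Nat.eq_dec (S i) N) as [H2|H2]].
    + rewrite Y1, Y1 by lia. change (f (iter f i z)) with (iter f (S i) z).
      rewrite (dist_self Hm). exact Hbeta.
    + rewrite Y1, Y2 by lia. rewrite <- H2, Nat.sub_diag, E0.
      change (f (iter f i z)) with (iter f (S i) z). rewrite H2. exact Ha.
    + destruct (le_lt_dec K i).
      * rewrite Y3, Y3 by lia. apply Htail. lia.
      * rewrite Y2, Y2 by lia. replace (S i - N)%nat with (S (i - N)) by lia. apply Hxs. lia.
Qed.

End Chains.

Section Component.
Variables (X : Type) (d : X -> X -> R) (f : X -> X).
Hypotheses (Hm : is_metric d) (Hc : compact_space d) (Hf : continuous_map d d f).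
Arguments Hf : clear implicits.
Variable C : X -> Prop.
Hypothesis HC : chain_component d f C.

Lemma component_inhabited : exists a, C a.
Proof. destruct HC as [x [CRx HCx]]. exists x. apply HCx. split; auto. Qed.

Lemma component_chain_rel {a b : X} : C a -> C b -> chain_rel d f a b.
Proof.
  intros Ca Cb. destruct HC as [x [_ HCx]].
  apply HCx in Ca as [_ [_ Hax]]. apply HCx in Cb as [_ [Hxb _]].
  exact (chain_rel_trans Hax Hxb).
Qed.

Lemma component_mem a z : C a -> chain_rel d f a z -> chain_rel d f z a -> C z.
Proof.
  intros Ca Haz Hza. destruct HC as [x [_ HCx]].
  apply HCx in Ca as [_ [Hxa Hax]]. apply HCx. repeat split.
  - exact (chain_rel_trans Hza Haz).
  - exact (chain_rel_trans Hxa Haz).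
  - exact (chain_rel_trans Hza Hax).
Qed.

Lemma component_closed : closed d C.
Proof.
  intros x Cx. apply NNPP. intros Hno. apply Cx.
  assert (Hnear : forall r, 0 < r -> exists c, C c /\ d x c < r).
  { intros r Hr. apply NNPP. intros Hn. apply Hno. exists r. split; auto.
    intros y Hy Cy. apply Hn. exists y; auto. }
  destruct (Hnear 1 Rlt_0_1) as [c0 [Cc0 _]].
  apply (component_mem Cc0).
  - apply (chain_rel_to_limit Hm). intros r eta Hr Heta.
    destruct (Hnear r Hr) as [c [Cc Hxc]].
    destruct (proj1 (chain_rel_iff d f c0 c) (component_chain_rel Cc0 Cc) eta Heta) as [k Hk].
    exists c, k. auto.
  - apply (chain_rel_from_limit Hm Hf). intros r eta Hr Heta.
    destruct (Hnear r Hr) as [c [Cc Hxc]].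
    destruct (proj1 (chain_rel_iff d f c c0) (component_chain_rel Cc Cc0) eta Heta) as [k Hk].
    exists c, k. auto.
Qed.

Lemma component_invariant x : C x -> C (f x).
Proof.
  intros Cx. apply (component_mem Cx).
  - apply chain_rel_iff. intros del Hd. exists 1%nat.
    apply (chain_between_orbit f Hm); auto; lra.
  - apply (chain_rel_from_limit Hm Hf). intros r eta Hr Heta.
    set (e := Rmin r eta / 2).
    assert (He : 0 < e) by (unfold e; pose proof (Rmin_glb_lt _ _ _ Hr Heta); lra).
    assert (Her : e < r) by (unfold e; pose proof (Rmin_l r eta); pose proof (Rmin_glb_lt _ _ _ Hr Heta); lra).
    assert (Hee : e <= eta) by (unfold e; pose proof (Rmin_r r eta); lra).
    destruct (proj1 (chain_rel_iff d f x x) (component_chain_rel Cx Cx) e He) as [k Hk].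
    (* a cycle run twice has length at least 2, so its first step can be dropped *)
    destruct (chain_between_drop_first (chain_between_cat Hk Hk)) as [p [Hp Hpx]].
    { pose proof (chain_between_len Hk). lia. }
    exists p, (k + k - 1)%nat. split; [lra|].
    exact (chain_between_le Hee Hpx).
Qed.

Lemma component_iter x i : C x -> C (iter f i x).
Proof. intros Cx. induction i; simpl; auto. apply component_invariant; auto. Qed.

Lemma component_chains_stay_close a b th :
  C a -> C b -> 0 < th ->
  exists eps, 0 < eps /\ forall p, on_chain d f eps a b p -> exists c, C c /\ d p c < th.
Proof.
  intros Ca Cb Hth. apply NNPP. intros Hno.
  destruct (cluster_point Hm Hc (fun eps p => on_chain d f eps a b p /\
                                   forall c, C c -> th <= d p c)) as [z Hz].
  - intros e1 e2 p He [Hp Hfar]. split; auto. exact (on_chain_le He Hp).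
  - intros eps He. apply NNPP. intros Hn. apply Hno. exists eps. split; auto.
    intros p Hp. apply NNPP. intros Hp'. apply Hn. exists p. split; auto.
    intros c Cc. apply Rnot_lt_le. intros Hlt. apply Hp'. exists c; auto.
  - destruct (chain_rel_through_cluster Hm Hf z (a := a) (b := b)) as [Haz Hzb].
    { intros r eta Hr Heta. destruct (Hz r eta Hr Heta) as [p [Hzp [Hp _]]]. exists p; auto. }
    assert (Cz : C z).
    { apply (component_mem Ca Haz). apply (chain_rel_trans Hzb), component_chain_rel; auto. }
    destruct (Hz th 1 Hth Rlt_0_1) as [p [Hzp [_ Hfar]]].
    specialize (Hfar z Cz). rewrite (dist_sym Hm) in Hzp. lra.
Qed.

Lemma component_chain {a b : X} {del : R} :
  C a -> C b -> 0 < del -> exists k, chain_between d f C del a b k.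
Proof.
  intros Ca Cb Hdel.
  destruct (continuous_uniform Hm Hc Hf (eps := del/3) ltac:(lra)) as [r [Hr Hunif]].
  set (th := Rmin r (del/3)).
  assert (Hth : 0 < th) by (apply Rmin_glb_lt; lra).
  destruct (component_chains_stay_close Ca Cb Hth) as [eps [Heps Hclose]].
  set (e := Rmin eps (del/3)).
  assert (He : 0 < e) by (apply Rmin_glb_lt; lra).
  destruct (proj1 (chain_rel_iff d f a b) (component_chain_rel Ca Cb) e He)
    as [k [xs [[Hxs _] [E0 Ek]]]].
  exists k. subst a b.
  apply chain_between_le with (del/3 + e + th).
  { unfold e, th. pose proof (Rmin_r eps (del/3)). pose proof (Rmin_r r (del/3)). lra. }
  apply (chain_of_nearby Hm); auto.
  - intros y1 y2 H. apply Hunif. pose proof (Rmin_l r (del/3)). unfold th in H. lra.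
  - intros i Hi. apply Hclose. apply on_chain_le with e; [apply Rmin_l|].
    exists xs, k, i. split; [exact Hxs|]. repeat split; auto; lia.
Qed.

End Component.

Section NumericalSemigroup.
Variable Sg : nat -> Prop.
Hypothesis Sg_add : forall p q, Sg p -> Sg q -> Sg (p + q).
Hypothesis Sg_nonzero : exists p, Sg p /\ p <> 0%nat.

Let Sg0 k := k = 0%nat \/ Sg k.

Lemma Sg0_add p q : Sg0 p -> Sg0 q -> Sg0 (p + q).
Proof.
  intros [->|Hp] [->|Hq]; unfold Sg0; auto.
  rewrite Nat.add_0_r. auto.
Qed.

Lemma Sg0_mul t p : Sg0 p -> Sg0 (t * p).
Proof.
  intros Hp. induction t as [|t IH]; [left; reflexivity|].
  replace (S t * p)%nat with (p + t * p)%nat by lia. apply Sg0_add; auto.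
Qed.

Lemma Sg_of_Sg0 k : Sg0 k -> k <> 0%nat -> Sg k.
Proof. intros [->|Hk] Hk0; [contradiction | exact Hk]. Qed.

(* [m] is the least positive difference of two elements of [Sg0]. *)
Lemma semigroup_least_gap :
  exists m p q, m <> 0%nat /\ Sg0 p /\ Sg0 q /\ p = (q + m)%nat /\
    forall k, Sg k -> Nat.divide m k.
Proof.
  set (Gap := fun k => k <> 0%nat /\ exists p q, Sg0 p /\ Sg0 q /\ p = (q + k)%nat).
  destruct (dec_inh_nat_subset_has_unique_least_element Gap (fun k => classic (Gap k)))
    as [m [[[Hm0 [p [q [Hp [Hq Hpq]]]]] Hmin] _]].
  { destruct Sg_nonzero as [p [Sp Hp]]. exists p. split; auto.
    exists p, 0%nat. unfold Sg0. auto. }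
  exists m, p, q. repeat split; auto. intros s Ss.
  pose proof (Nat.div_mod s m Hm0) as Hs. pose proof (Nat.mod_upper_bound s m Hm0).
  set (t := (s / m)%nat) in *. set (r := (s mod m)%nat) in *.
  destruct (Nat.eq_dec r 0) as [Hr|Hr]; [exists t; lia|].
  exfalso. enough (m <= r)%nat by lia. apply Hmin. split; auto.
  exists (s + t * q)%nat, (t * p)%nat. split; [|split].
  - apply Sg0_add; [right; exact Ss | apply Sg0_mul; exact Hq].
  - apply Sg0_mul; exact Hp.
  - subst p. nia.
Qed.

Lemma semigroup_gcd :
  exists m, m <> 0%nat /\ (forall k, Sg k -> Nat.divide m k) /\
    (forall m', (forall k, Sg k -> Nat.divide m' k) -> Nat.divide m' m) /\
    exists T, forall k, (T <= k)%nat -> Nat.divide m k -> Sg k.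
Proof.
  destruct semigroup_least_gap as [m [p [q [Hm0 [Hp [Hq [Hpq Hdiv]]]]]]].
  exists m. split; [exact Hm0|]. split; [exact Hdiv|]. split.
  - intros m' Hm'.
    assert (D0 : forall k, Sg0 k -> Nat.divide m' k).
    { intros k [->|Sk]; [apply Nat.divide_0_r | auto]. }
    apply (Nat.divide_add_cancel_r _ q); [apply D0; exact Hq | rewrite <- Hpq; apply D0; exact Hp].
  - destruct (Nat.eq_dec q 0) as [Hq0|Hq0].
    + exists 1%nat. intros k Hk [j ->]. apply Sg_of_Sg0; [|lia].
      replace (j * m)%nat with (j * p)%nat by lia. apply Sg0_mul. exact Hp.
    + (* with q = t m and p = q + m, every j m with j >= t^2 is a sum of copies of q and p *)
      destruct (Hdiv q (Sg_of_Sg0 Hq Hq0)) as [t Ht].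
      assert (Ht0 : t <> 0%nat) by (intros ->; lia).
      exists (t * t * m)%nat. intros k Hk [j ->].
      assert (Hj : (t * t <= j)%nat) by (apply Nat.mul_le_mono_pos_r with m; lia).
      pose proof (Nat.div_mod j t Ht0) as Hjd. pose proof (Nat.mod_upper_bound j t Ht0).
      set (u := (j / t)%nat) in *. set (v := (j mod t)%nat) in *.
      assert (Hu : (t <= u)%nat) by nia.
      apply Sg_of_Sg0; [|nia].
      replace (j * m)%nat with ((u - v) * q + v * p)%nat.
      * apply Sg0_add; apply Sg0_mul; assumption.
      * replace u with ((u - v) + v)%nat in Hjd by lia. subst p. nia.
Qed.

End NumericalSemigroup.

Lemma cycle_gcd_unique (X : Type) (d : X -> X -> R) (f : X -> X) (C : X -> Prop) del m1 m2 :
  is_cycle_gcd d f C del m1 -> is_cycle_gcd d f C del m2 -> m1 = m2.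
Proof. intros [H1 H1'] [H2 H2']. apply Nat.divide_antisym; auto. Qed.

Lemma cycle_gcd_le (X : Type) (d : X -> X -> R) (f : X -> X) (C : X -> Prop) del1 del2 m1 m2 :
  del1 <= del2 -> is_cycle_gcd d f C del1 m1 -> is_cycle_gcd d f C del2 m2 -> Nat.divide m2 m1.
Proof.
  intros Hle [_ H1] [H2 _]. apply H1. intros k [xs [[[Hk Hx] Px] E]].
  apply H2. exists xs. repeat split; auto.
  intros i Hi. specialize (Hx i Hi). lra.
Qed.

Lemma sim_Cd_iff (X : Type) (d : X -> X -> R) (f : X -> X) (C : X -> Prop) del x y :
  sim_Cd d f C del x y <->
  C x /\ C y /\ exists m, is_cycle_gcd d f C del m /\
    exists k, chain_between d f C del x y k /\ Nat.divide m k.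
Proof.
  split.
  - intros [Cx [Cy [m [Hm [xs [k [Hxs [E0 [Ek Hdiv]]]]]]]]].
    repeat split; auto. exists m. split; auto. exists k. split; auto. exists xs. auto.
  - intros [Cx [Cy [m [Hm [k [[xs [Hxs [E0 Ek]]] Hdiv]]]]]].
    repeat split; auto. exists m. split; auto. exists xs, k. auto.
Qed.

Section CycleGcd.
Variables (X : Type) (d : X -> X -> R) (f : X -> X).
Hypotheses (Hm : is_metric d) (Hc : compact_space d) (Hf : continuous_map d d f).
Arguments Hf : clear implicits.
Variable C : X -> Prop.
Hypothesis HC : chain_component d f C.
Variable del : R.
Hypothesis Hdel : 0 < del.

Lemma cycle_gcd_divides m u k :
  is_cycle_gcd d f C del m -> chain_between d f C del u u k -> Nat.divide m k.
Proof.
  intros [Hdiv _] [xs [Hxs [E0 Ek]]]. apply Hdiv. exists xs. split; [exact Hxs | congruence].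
Qed.

Lemma cycle_gcd_at {a : X} :
  C a -> exists m, m <> 0%nat /\ is_cycle_gcd d f C del m /\
    exists T, forall k, (T <= k)%nat -> Nat.divide m k -> chain_between d f C del a a k.
Proof.
  intros Ca.
  destruct (@semigroup_gcd (fun k => chain_between d f C del a a k)) as [m [Hm0 [Hdiv [Hgreat HT]]]].
  - intros p q. apply chain_between_cat.
  - destruct (component_chain Hm Hc Hf HC Ca Ca Hdel) as [k Hk].
    exists k. split; auto. pose proof (chain_between_len Hk). lia.
  - exists m. split; [exact Hm0|]. split; [split|exact HT].
    + intros k [xs [Hxs Hcyc]].
      pose proof (proj2 Hxs 0%nat (Nat.le_0_l k)) as Cu.
      destruct (component_chain Hm Hc Hf HC Ca Cu Hdel) as [k1 H1].
      destruct (component_chain Hm Hc Hf HC Cu Ca Hdel) as [k2 H2].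
      assert (Hu : chain_between d f C del (xs 0%nat) (xs 0%nat) k) by (exists xs; split; [exact Hxs | split; [reflexivity | symmetry; exact Hcyc]]).
      apply (Nat.divide_add_cancel_r _ (k1 + k2)); [apply Hdiv, (chain_between_cat H1 H2)|].
      replace (k1 + k2 + k)%nat with (k1 + k + k2)%nat by lia.
      apply Hdiv, (chain_between_cat (chain_between_cat H1 Hu) H2).
    + intros m' Hm'. apply Hgreat. intros k [xs [Hxs [E0 Ek]]].
      apply Hm'. exists xs. split; [exact Hxs | congruence].
Qed.

Lemma cycle_gcd_exists : exists m, is_cycle_gcd d f C del m.
Proof.
  destruct (component_inhabited HC) as [a Ca].
  destruct (cycle_gcd_at Ca) as [m [_ [Hgcd _]]]. exists m. exact Hgcd.
Qed.

Lemma sim_Cd_refl {c : X} : C c -> sim_Cd d f C del c c.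
Proof.
  intros Cc. destruct cycle_gcd_exists as [m Hgcd].
  destruct (component_chain Hm Hc Hf HC Cc Cc Hdel) as [k Hk].
  apply sim_Cd_iff. repeat split; auto. exists m. split; auto.
  exists k. split; auto. exact (cycle_gcd_divides Hgcd Hk).
Qed.

(* [T] is uniform in [b] because finitely many balls of radius [del/2] cover [C]. *)
Lemma chain_of_admissible_length {m : nat} {a : X} :
  is_cycle_gcd d f C del m -> C a ->
  exists T, forall b s l, chain_between d f C del b a s -> (T <= l)%nat ->
    Nat.divide m (l + s) -> chain_between d f C del a b l.
Proof.
  intros Hgcd Ca.
  destruct (cycle_gcd_at Ca) as [m' [_ [Hgcd' [Ta HTa]]]].
  rewrite (cycle_gcd_unique Hgcd' Hgcd) in HTa.
  destruct (closed_ball_cover_fin Hm Hc (fun _ => del/2) (component_closed Hm Hf HC))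
    as [qs Hqs]; [intros; lra|].
  destruct (list_bound (fun q k => C q -> chain_between d f C (del/2) a q k) qs) as [M HM].
  { intros q _. destruct (classic (C q)) as [Cq|Cq].
    - assert (Hdel2 : 0 < del / 2) by lra.
      destruct (component_chain Hm Hc Hf HC Ca Cq Hdel2) as [k Hk].
      exists k. auto.
    - exists 0%nat. contradiction. }
  exists (Ta + M)%nat. intros b s l Hba Hl Hdiv.
  destruct (chain_between_ends Hba) as [Cb _].
  destruct (Hqs b Cb) as [q [Hq [Cq Hqb]]].
  destruct (HM q Hq) as [k [HkM Hk]]. specialize (Hk Cq).
  assert (Hab : chain_between d f C del a b k).
  { apply chain_between_le with (del/2 + del/2); [lra|].
    apply (chain_between_set_last Hm) with q; auto. lra. }
  assert (Hdk : Nat.divide m (k + s)) by exact (cycle_gcd_divides Hgcd (chain_between_cat Hab Hba)).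
  replace l with ((l - k) + k)%nat by lia.
  apply chain_between_cat with a; auto.
  apply HTa; [lia|].
  replace (l - k)%nat with ((l + s) - (k + s))%nat by lia.
  apply Nat.divide_sub_r; auto.
Qed.

End CycleGcd.

Section AsymptoticSelection.
Variables (X : Type) (d : X -> X -> R) (K : X -> Prop).

Lemma best_approximation_upto c0 p t :
  K c0 -> exists c, K c /\ forall k, (k <= t)%nat ->
    (exists c', K c' /\ d p c' < / INR (S k)) -> d p c < / INR (S k).
Proof.
  intros Kc0. induction t as [|t [c [Kc Hc]]].
  - destruct (classic (exists c', K c' /\ d p c' < / INR 1)) as [[c' [Kc' Hc']]|Hn].
    + exists c'. split; auto. intros k Hk _. replace k with 0%nat by lia. exact Hc'.
    + exists c0. split; auto. intros k Hk Hex. replace k with 0%nat in Hex by lia. contradiction.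
  - destruct (classic (exists c', K c' /\ d p c' < / INR (S (S t)))) as [[c' [Kc' Hc']]|Hn].
    + exists c'. split; auto. intros k Hk _.
      apply Rlt_le_trans with (/ INR (S (S t))); auto.
      apply Rinv_le_contravar; [apply lt_0_INR; lia | apply le_INR; lia].
    + exists c. split; auto. intros k Hk Hex.
      destruct (Nat.eq_dec k (S t)) as [->|Hne]; [contradiction | apply Hc; auto; lia].
Qed.

Lemma asymptotic_selection (u : nat -> X) :
  (exists c, K c) ->
  (forall eps, 0 < eps -> eventually (fun i => exists c, K c /\ d (u i) c < eps)) ->
  exists c : nat -> X, (forall i, K (c i)) /\ asymptotic d u c.
Proof.
  intros [c0 Kc0] Hnear.
  destruct (choice (fun i c => K c /\ forall k, (k <= i)%nat ->
     (exists c', K c' /\ d (u i) c' < / INR (S k)) -> d (u i) c < / INR (S k))) as [c Hc].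
  { intros i. eapply best_approximation_upto. exact Kc0. }
  exists c. split; [intros i; apply Hc|].
  intros eps Heps. destruct (archimed_cor1 eps Heps) as [k [Hk Hk0]].
  destruct (Hnear (/ INR (S k))) as [N HN]. { apply Rinv_0_lt_compat, lt_0_INR. lia. }
  exists (N + k)%nat. intros i Hi.
  assert (/ INR (S k) < eps).
  { apply Rle_lt_trans with (/ INR k); auto.
    apply Rinv_le_contravar; [apply lt_0_INR; lia | apply le_INR; lia]. }
  pose proof (proj2 (Hc i) k ltac:(lia) (HN i ltac:(lia))). lra.
Qed.

End AsymptoticSelection.

Section Conjugacy.
Variables (X Y : Type) (d : X -> X -> R) (d' : Y -> Y -> R).
Hypotheses (Hm : is_metric d) (Hc : compact_space d) (Hm' : is_metric d') (Hc' : compact_space d').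
Variables (f : X -> X) (g : Y -> Y).
Hypotheses (Hf : continuous_map d d f) (Hg : continuous_map d' d' g).
Arguments Hf : clear implicits.
Arguments Hg : clear implicits.
Variables (C D : X -> Prop) (C' : Y -> Prop) (h : X -> Y).
Hypotheses (HC : chain_component d f C) (HC' : chain_component d' g C')
  (Hh : homeo_on d d' C C' h) (Hconj : forall x, C x -> h (f x) = g (h x)).
Variable x0 : X.
Hypotheses (Cx0 : C x0) (HDx0 : forall y, D y <-> C y /\ sim_C d f C x0 y).

Local Notation D' := (image h D).

Lemma h_maps {x : X} : C x -> C' (h x).
Proof. apply Hh. Qed.

Lemma h_uniform eps :
  0 < eps -> exists th, 0 < th /\ forall a b, C a -> C b -> d a b < th -> d' (h a) (h b) < eps.
Proof.
  intros He. destruct Hh as [_ [_ [_ [Hcont _]]]].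
  exact (uniform_continuous_on Hm Hc h Hm' (component_closed Hm Hf HC) Hcont He).
Qed.

Lemma h_inv_uniform eps :
  0 < eps -> exists eta, 0 < eta /\ forall a b, C a -> C b -> d' (h a) (h b) < eta -> d a b < eps.
Proof.
  intros He. destruct Hh as [Hmap [_ [Hsurj [_ Hicont]]]].
  destruct (uniform_on_closed Hm' Hc'
              (fun y1 y2 => forall a b, C a -> C b -> h a = y1 -> h b = y2 -> d a b < eps)
              (component_closed Hm' Hg HC')) as [r [Hr HQ]].
  - intros y Cy. destruct (Hsurj y Cy) as [x [Cx <-]].
    destruct (Hicont x (eps/2) Cx ltac:(lra)) as [del [Hd Hball]].
    exists del. split; auto. intros y1 y2 _ _ H1 H2 a b Ca Cb <- <-.
    pose proof (Hball a Ca H1). pose proof (Hball b Cb H2).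
    pose proof (dist_triangle Hm a x b). rewrite (dist_sym Hm a x) in *. lra.
  - exists r. split; auto. intros a b Ca Cb Hab. apply (HQ (h a) (h b)); auto.
Qed.

Lemma h_iter x i : C x -> h (iter f i x) = iter g i (h x).
Proof.
  intros Cx. induction i as [|i IH]; [reflexivity|].
  change (h (f (iter f i x)) = g (iter g i (h x))).
  rewrite Hconj, IH; [reflexivity|]. apply (component_iter Hm Hf HC); auto.
Qed.

Lemma h_maps_chains beta :
  0 < beta -> exists del, 0 < del /\ forall a b k,
    chain_between d f C del a b k -> chain_between d' g C' beta (h a) (h b) k.
Proof.
  intros Hb. destruct (h_uniform Hb) as [th [Hth Hu]].
  exists (th/2). split; [lra|]. intros a b k [xs [[[Hk Hx] Px] [E0 Ek]]].
  exists (fun i => h (xs i)). split; [split; [split|] | split].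
  - exact Hk.
  - intros i Hi. rewrite <- Hconj by (apply Px; lia). apply Rlt_le, Hu.
    + apply (component_invariant Hm Hf HC), Px. lia.
    + apply Px. lia.
    + specialize (Hx i Hi). lra.
  - intros i Hi. apply h_maps, Px. exact Hi.
  - rewrite E0. reflexivity.
  - rewrite Ek. reflexivity.
Qed.

Lemma cycle_gcd_image_divides del beta m m' :
  (forall a b k, chain_between d f C del a b k -> chain_between d' g C' beta (h a) (h b) k) ->
  is_cycle_gcd d f C del m -> is_cycle_gcd d' g C' beta m' -> Nat.divide m' m.
Proof.
  intros Hmap [_ Hgreat] Hgcd'. apply Hgreat. intros k [xs [Hxs Hcyc]].
  apply (cycle_gcd_divides Hgcd' (u := h (xs 0%nat))). rewrite Hcyc at 2.
  apply Hmap. exists xs. split; [exact Hxs | split; reflexivity].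
Qed.

Lemma D_delta_image beta :
  0 < beta -> exists del, 0 < del /\
    forall y, D_delta d f C D del y -> D_delta d' g C' D' beta (h y).
Proof.
  intros Hb. destruct (h_maps_chains Hb) as [del [Hd Hmap]].
  exists del. split; auto. intros y [Cy [u [Du Hsim]]].
  apply sim_Cd_iff in Hsim as [Cu [_ [m [Hgcd [k [Hk Hdiv]]]]]].
  destruct (cycle_gcd_exists Hm' Hc' Hg HC' Hb) as [m' Hgcd'].
  split; [apply h_maps; exact Cy|]. exists (h u). split; [exists u; auto|].
  apply sim_Cd_iff. split; [apply h_maps; exact Cu|]. split; [apply h_maps; exact Cy|].
  exists m'. split; auto. exists k. split; [apply Hmap; exact Hk|].
  apply Nat.divide_trans with m; auto. exact (cycle_gcd_image_divides Hmap Hgcd Hgcd').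
Qed.

Lemma chain_from_base beta m y :
  0 < beta -> is_cycle_gcd d' g C' beta m -> D_delta d' g C' D' beta y ->
  exists l, Nat.divide m l /\ chain_between d' g C' beta (h x0) y l.
Proof.
  intros Hb Hgcd [_ [u [[u0 [Du0 <-]] Hsim]]].
  apply sim_Cd_iff in Hsim as [_ [_ [m1 [Hgcd1 [k [Hk Hdk]]]]]].
  rewrite (cycle_gcd_unique Hgcd1 Hgcd) in Hdk.
  destruct (h_maps_chains Hb) as [del [Hd Hmap]].
  destruct (proj1 (HDx0 u0) Du0) as [_ Hsim0].
  destruct (proj1 (sim_Cd_iff d f C del x0 u0) (Hsim0 del Hd))
    as [_ [_ [mX [HgcdX [k0 [Hk0 Hdk0]]]]]].
  exists (k0 + k)%nat. split.
  - apply Nat.divide_add_r; auto. apply Nat.divide_trans with mX; auto.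
    exact (cycle_gcd_image_divides Hmap HgcdX Hgcd).
  - apply chain_between_cat with (h u0); auto.
Qed.

Lemma Vs_image_base : Vs d' g C' D' (h x0).
Proof.
  intros beta Hb. split.
  - intros eps He. exists 0%nat. intros i _. exists (iter g i (h x0)). split.
    + apply (component_iter Hm' Hg HC'), h_maps, Cx0.
    + rewrite (dist_self Hm'). exact He.
  - intros eps He. exists 0%nat. intros i _. exists (h x0).
    split; [|rewrite (dist_self Hm'); exact He].
    split; [apply h_maps, Cx0|]. exists (h x0). split.
    + exists x0. split; auto. apply HDx0. split; auto.
      intros del Hd. exact (sim_Cd_refl Hm Hc Hf HC Hd Cx0).
    + exact (sim_Cd_refl Hm' Hc' Hg HC' Hb (h_maps Cx0)).
Qed.

Lemma image_pseudo_orbit_tail {x : X} {c : nat -> X} :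
  (forall i, C (c i)) -> asymptotic d (fun i => iter f i x) c ->
  forall eta, 0 < eta -> eventually (fun i => d' (g (h (c i))) (h (c (S i))) < eta).
Proof.
  intros Cc Hxc eta Heta.
  destruct (h_uniform Heta) as [th [Hth Hu]].
  destruct (continuous_uniform Hm Hc Hf (eps := th/2) ltac:(lra)) as [r [Hr Hunif]].
  destruct (Hxc (Rmin r (th/2)) ltac:(apply Rmin_glb_lt; lra)) as [M HM].
  exists M. intros i Hi. rewrite <- Hconj by auto.
  apply Hu; [apply (component_invariant Hm Hf HC); auto | auto |].
  pose proof (HM i Hi). pose proof (HM (S i) ltac:(lia)).
  pose proof (Rmin_l r (th/2)). pose proof (Rmin_r r (th/2)).
  assert (d (f (c i)) (f (iter f i x)) < th/2) by (apply Hunif; rewrite (dist_sym Hm); lra).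
  pose proof (dist_triangle Hm (f (c i)) (f (iter f i x)) (c (S i))).
  change (iter f (S i) x) with (f (iter f i x)) in *. lra.
Qed.

Lemma Vs_of_asymptotic_image {x : X} {c : nat -> X} {w : Y} :
  Vs d f C D x -> (forall i, C (c i)) -> asymptotic d (fun i => iter f i x) c ->
  asymptotic d' (fun i => iter g i w) (fun i => h (c i)) -> Vs d' g C' D' w.
Proof.
  intros Hx Cc Hxc Hwc beta Hb. split.
  - intros eta He. destruct (Hwc eta He) as [M HM]. exists M. intros i Hi.
    exists (h (c i)). split; [apply h_maps | apply HM]; auto.
  - intros eta He.
    destruct (D_delta_image Hb) as [del [Hd Himg]].
    destruct (h_uniform (eps := eta/2) ltac:(lra)) as [th [Hth Hu]].
    destruct (eventually_and (proj2 (Hx del Hd) (th/2) ltac:(lra))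
               (eventually_and (Hxc (th/2) ltac:(lra)) (Hwc (eta/2) ltac:(lra)))) as [N HN].
    exists N. intros i Hi. destruct (HN i Hi) as [[y [Hy Hxy]] [Hxci Hwci]].
    exists (h y). split; [exact (Himg y Hy)|].
    assert (Cy : C y) by apply Hy.
    rewrite <- h_iter by exact Cy.
    assert (d' (h (c i)) (h (iter f i y)) < eta/2).
    { apply Hu; [auto | apply (component_iter Hm Hf HC); exact Cy |].
      pose proof (dist_triangle Hm (c i) (iter f i x) (iter f i y)).
      rewrite (dist_sym Hm (c i) (iter f i x)) in *. lra. }
    pose proof (dist_triangle Hm' (iter g i w) (h (c i)) (h (iter f i y))). lra.
Qed.

Definition aligned (beta : R) (m : nat) (y : Y) (i : nat) : Prop :=
  exists l, Nat.divide m l /\ chain_between d' g C' beta (h x0) y (l + i).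

Lemma aligned_chain beta m a N :
  0 < beta -> is_cycle_gcd d' g C' beta m -> aligned beta m a N ->
  exists T, forall b K, aligned beta m b K -> (N + T <= K)%nat ->
    chain_between d' g C' beta a b (K - N).
Proof.
  intros Hb Hgcd [l [Hl Ha]].
  destruct (chain_between_ends Ha) as [Cbase Ca].
  destruct (chain_of_admissible_length Hm' Hc' Hg HC' Hb Hgcd Ca) as [T HT].
  exists T. intros b K [l' [Hl' Hb']] HK.
  destruct (chain_between_ends Hb') as [_ Cb].
  destruct (component_chain Hm' Hc' Hg HC' Cb Cbase Hb) as [s Hs].
  apply HT with (s + (l + N))%nat; [exact (chain_between_cat Hs Ha) | lia |].
  assert (HKs : Nat.divide m (K + s)).
  { apply (Nat.divide_add_cancel_r _ l'); auto. rewrite Nat.add_assoc.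
    exact (cycle_gcd_divides Hgcd (chain_between_cat Hb' Hs)). }
  replace (K - N + (s + (l + N)))%nat with (K + s + l)%nat by lia.
  apply Nat.divide_add_r; auto.
Qed.

Lemma Vs_aligned_nearby z beta m :
  Vs d' g C' D' z -> 0 < beta -> is_cycle_gcd d' g C' beta m ->
  eventually (fun N => (1 <= N)%nat /\ exists a, d' (iter g N z) a < beta /\ aligned beta m a N).
Proof.
  intros Hz Hb Hgcd.
  assert (Hb2 : 0 < beta/2) by lra.
  destruct (cycle_gcd_exists Hm' Hc' Hg HC' Hb2) as [mh Hgcdh].
  assert (Hle : beta/2 <= beta) by lra.
  pose proof (cycle_gcd_le Hle Hgcdh Hgcd) as Hmh.
  destruct (proj2 (Hz (beta/2) Hb2) (beta/2) Hb2) as [N1 HN1].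
  exists (S N1). intros N HN. split; [lia|].
  destruct (HN1 N ltac:(lia)) as [y [Hy Hzy]].
  destruct (chain_from_base Hb2 Hgcdh Hy) as [l [Hl Hch]].
  exists (iter g N y). split; [lra|].
  exists l. split; [exact (Nat.divide_trans _ _ _ Hmh Hl)|].
  apply chain_between_cat with y.
  - apply chain_between_le with (beta/2); [lra | exact Hch].
  - apply (chain_between_orbit g Hm'); [lra | apply (component_invariant Hm' Hg HC') | apply Hy | lia].
Qed.

Lemma Vs_image_aligned x c beta m :
  Vs d f C D x -> (forall i, C (c i)) -> asymptotic d (fun i => iter f i x) c ->
  0 < beta -> is_cycle_gcd d' g C' beta m ->
  eventually (fun K => aligned beta m (h (c K)) K).
Proof.
  intros Hx Cc Hxc Hb Hgcd.
  assert (Hb2 : 0 < beta/2) by lra.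
  destruct (cycle_gcd_exists Hm' Hc' Hg HC' Hb2) as [mh Hgcdh].
  assert (Hle : beta/2 <= beta) by lra.
  pose proof (cycle_gcd_le Hle Hgcdh Hgcd) as Hmh.
  destruct (D_delta_image Hb2) as [del [Hd Himg]].
  destruct (h_uniform Hb2) as [th [Hth Hu]].
  destruct (eventually_and (proj2 (Hx del Hd) (th/2) ltac:(lra)) (Hxc (th/2) ltac:(lra)))
    as [K0 HK0].
  exists (S K0). intros K HK. destruct (HK0 K ltac:(lia)) as [[y [Hy Hxy]] Hxc'].
  assert (Cy : C y) by apply Hy.
  destruct (chain_from_base Hb2 Hgcdh (Himg y Hy)) as [l [Hl Hch]].
  exists l. split; [exact (Nat.divide_trans _ _ _ Hmh Hl)|].
  apply chain_between_le with (beta/2 + beta/2); [lra|].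
  apply (chain_between_set_last Hm') with (h (iter f K y)).
  - apply chain_between_cat with (h y); auto. rewrite h_iter by exact Cy.
    apply (chain_between_orbit g Hm'); [lra | apply (component_invariant Hm' Hg HC') | apply h_maps; exact Cy | lia].
  - apply h_maps, Cc.
  - apply Rlt_le, Hu; [apply (component_iter Hm Hf HC); exact Cy | apply Cc |].
    pose proof (dist_triangle Hm (iter f K y) (iter f K x) (c K)).
    rewrite (dist_sym Hm (iter f K y) (iter f K x)) in *. lra.
Qed.

Lemma shadow_image_orbit z x c eps :
  s_limit_shadowing d' g -> Vs d' g C' D' z -> Vs d f C D x ->
  (forall i, C (c i)) -> asymptotic d (fun i => iter f i x) c -> 0 < eps ->
  exists w, d' w z < eps /\ asymptotic d' (fun i => iter g i w) (fun i => h (c i)).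
Proof.
  intros Hsh Hz Hx Cc Hxc Heps.
  destruct (Hsh (eps/2) ltac:(lra)) as [beta [Hb Hshadow]].
  destruct (cycle_gcd_exists Hm' Hc' Hg HC' Hb) as [m Hgcd].
  destruct (Vs_aligned_nearby Hz Hb Hgcd) as [N HN].
  destruct (HN N (le_n N)) as [HN1 [a [Hza Ha]]].
  destruct (aligned_chain Hb Hgcd Ha) as [T HT].
  destruct (eventually_and (Vs_image_aligned Hx Cc Hxc Hb Hgcd)
              (image_pseudo_orbit_tail Cc Hxc Hb)) as [K0 HK0].
  set (K := (K0 + N + T)%nat).
  destruct (pseudo_orbit_glue Hm' z (fun i => h (c i)) HN1 (Rlt_le _ _ Hza)
              (HT _ K (proj1 (HK0 K ltac:(lia))) ltac:(lia)) eq_refl)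
    as [ys [Y0 [Yerr Ytail]]].
  { intros i Hi. apply Rlt_le, HK0. lia. }
  destruct (Hshadow ys Yerr) as [w [Hw Hwlim]].
  - intros eta Heta. destruct (image_pseudo_orbit_tail Cc Hxc Heta) as [M HM].
    exists (M + K)%nat. intros i Hi. rewrite !Ytail by lia. apply HM. lia.
  - exists w. split.
    + specialize (Hw 0%nat). simpl in Hw. rewrite Y0 in Hw. lra.
    + intros eta Heta. destruct (Hwlim eta Heta) as [M HM]. exists (M + K)%nat.
      intros i Hi. rewrite <- Ytail by lia. apply HM. lia.
Qed.

Lemma separated_image del eta p1 p2 c1 c2 w1 w2 :
  (forall a b, C a -> C b -> d' (h a) (h b) < eta -> d a b < del / 2) ->
  C c1 -> C c2 -> d p1 c1 < del / 4 -> d p2 c2 < del / 4 ->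
  d' w1 (h c1) < eta / 4 -> d' w2 (h c2) < eta / 4 ->
  del < d p1 p2 -> eta / 4 < d' w1 w2.
Proof.
  intros Hinv C1 C2 H1 H2 H3 H4 Hfar.
  assert (eta <= d' (h c1) (h c2)).
  { apply Rnot_lt_le. intros Hlt. specialize (Hinv _ _ C1 C2 Hlt).
    pose proof (dist_triangle Hm p1 c1 p2). pose proof (dist_triangle Hm c1 c2 p2).
    rewrite (dist_sym Hm c2 p2) in *. lra. }
  pose proof (dist_triangle Hm' (h c1) w1 (h c2)). pose proof (dist_triangle Hm' w1 w2 (h c2)).
  pose proof (dist_nonneg Hm' w1 (h c1)).
  rewrite (dist_sym Hm' (h c1) w1) in *. lra.
Qed.

Lemma close_image e th p1 p2 c1 c2 w1 w2 :
  (forall a b, C a -> C b -> d a b < th -> d' (h a) (h b) < e / 3) ->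
  C c1 -> C c2 -> d p1 c1 < th / 3 -> d p2 c2 < th / 3 ->
  d' w1 (h c1) < e / 3 -> d' w2 (h c2) < e / 3 ->
  d p1 p2 < th / 3 -> d' w1 w2 < e.
Proof.
  intros Hu C1 C2 H1 H2 H3 H4 Hnear.
  assert (d' (h c1) (h c2) < e / 3).
  { apply Hu; auto.
    pose proof (dist_triangle Hm c1 p1 c2). pose proof (dist_triangle Hm p1 p2 c2).
    rewrite (dist_sym Hm c1 p1) in *. lra. }
  pose proof (dist_triangle Hm' w1 (h c1) w2). pose proof (dist_triangle Hm' (h c1) (h c2) w2).
  rewrite (dist_sym Hm' (h c2) w2) in *. lra.
Qed.

Lemma scrambled_image {F G : (nat -> Prop) -> Prop} {n : nat} {del eta : R}
  {xs : nat -> X} {cs : nat -> nat -> X} {ws : nat -> Y} :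
  furstenberg F -> full_family F -> furstenberg G -> full_family G ->
  (forall a b, C a -> C b -> d' (h a) (h b) < eta -> d a b < del / 2) -> 0 < del -> 0 < eta ->
  (forall j, (j < n)%nat ->
     (forall i, C (cs j i)) /\ asymptotic d (fun i => iter f i (xs j)) (cs j)) ->
  (forall j, (j < n)%nat -> asymptotic d' (fun i => iter g i (ws j)) (fun i => h (cs j i))) ->
  scrambled d f F G n del xs -> scrambled d' g F G n (eta / 4) ws.
Proof.
  intros HF HFfull HG HGfull Hinv Hdel Heta Hcs Hws [HS HT].
  assert (Hnear : forall r r', 0 < r -> 0 < r' -> eventually (fun i => forall j, (j < n)%nat ->
            d (iter f i (xs j)) (cs j i) < r /\ d' (iter g i (ws j)) (h (cs j i)) < r')).
  { intros r r' Hr Hr'. apply eventually_forall_lt. intros j Hj.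
    apply eventually_and; [apply (proj2 (Hcs j Hj)) | apply Hws]; auto. }
  split.
  - apply (family_eventually_mono HF HFfull HS (Hnear (del/4) (eta/4) ltac:(lra) ltac:(lra))).
    intros i HSi Hi j k Hjk Hkn.
    destruct (Hi j ltac:(lia)) as [A1 A2]. destruct (Hi k Hkn) as [B1 B2].
    apply (separated_image Hinv (proj1 (Hcs j ltac:(lia)) i) (proj1 (Hcs k Hkn) i) A1 B1 A2 B2).
    apply HSi; auto.
  - intros e He. destruct (h_uniform (eps := e/3) ltac:(lra)) as [th [Hth Hu]].
    apply (family_eventually_mono HG HGfull (HT (th/3) ltac:(lra))
             (Hnear (th/3) (e/3) ltac:(lra) ltac:(lra))).
    intros i HTi Hi j k Hjk Hkn.
    destruct (Hi j ltac:(lia)) as [A1 A2]. destruct (Hi k Hkn) as [B1 B2].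
    apply (close_image Hu (proj1 (Hcs j ltac:(lia)) i) (proj1 (Hcs k Hkn) i) A1 B1 A2 B2).
    apply HTi; auto.
Qed.

Theorem dense_chaotic_image (F G : (nat -> Prop) -> Prop) n del :
  furstenberg F -> full_family F -> furstenberg G -> full_family G -> 0 < del ->
  s_limit_shadowing d' g -> dense_chaotic d f F G n del (Vs d f C D) ->
  exists del', 0 < del' /\ dense_chaotic d' g F G n del' (Vs d' g C' D').
Proof.
  intros HF HFfull HG HGfull Hdel Hsh [[p Hp] Hdense].
  destruct (Hdense (fun _ => p) (fun _ _ => Hp) 1 Rlt_0_1) as [xs [Hxs [Hscr _]]].
  destruct (choice_below (n := n) (fun j c => (forall i, C (c i)) /\
              asymptotic d (fun i => iter f i (xs j)) c) (inhabits (fun _ => x0))) as [cs Hcs].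
  { intros j Hj. apply asymptotic_selection; [exists x0; exact Cx0|].
    exact (proj1 (Hxs j Hj 1 Rlt_0_1)). }
  destruct (h_inv_uniform (eps := del/2) ltac:(lra)) as [eta [Heta Hinv]].
  exists (eta/4). split; [lra|]. split; [exists (h x0); exact Vs_image_base|].
  intros zs Hzs eps Heps.
  destruct (choice_below (n := n) (fun j w => Vs d' g C' D' w /\ d' w (zs j) < eps /\
              asymptotic d' (fun i => iter g i w) (fun i => h (cs j i))) (inhabits (h x0)))
    as [ws Hws].
  { intros j Hj. destruct (Hcs j Hj) as [Cc Hxc].
    destruct (shadow_image_orbit Hsh (Hzs j Hj) (Hxs j Hj) Cc Hxc Heps) as [w [Hwz Hw]].
    exists w. split; [exact (Vs_of_asymptotic_image (Hxs j Hj) Cc Hxc Hw) | auto]. }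
  exists ws. split; [|split].
  - intros j Hj. apply Hws; auto.
  - refine (scrambled_image HF HFfull HG HGfull Hinv Hdel Heta Hcs _ Hscr).
    intros j Hj. apply Hws; auto.
  - intros j Hj. apply Hws; auto.
Qed.

End Conjugacy.

Theorem corollary1p1 :
  forall (X Y : Type) (d : X -> X -> R) (d' : Y -> Y -> R),
    is_metric d -> compact_space d -> is_metric d' -> compact_space d' ->
  forall (f : X -> X) (g : Y -> Y),
    continuous_map d d f -> continuous_map d' d' g ->
  forall (C D : X -> Prop) (C' : Y -> Prop) (h : X -> Y),
    chain_component d f C -> D_class d f C D -> chain_component d' g C' ->
    homeo_on d d' C C' h -> (forall x, C x -> h (f x) = g (h x)) ->
  forall (F G : (nat -> Prop) -> Prop),
    furstenberg F -> full_family F -> furstenberg G -> full_family G ->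
  forall (n : nat) (del : R), (2 <= n)%nat -> 0 < del ->
    s_limit_shadowing d' g ->
    dense_chaotic d f F G n del (Vs d f C D) ->
    exists del', 0 < del' /\ dense_chaotic d' g F G n del' (Vs d' g C' (image h D)).
Proof.
  intros X Y d d' Hm Hc Hm' Hc' f g Hf Hg C D C' h HC [x0 [Cx0 HDx0]] HC' Hh Hconj
    F G HF HFfull HG HGfull n del _ Hdel Hsh Hchaos.
  exact (dense_chaotic_image Hm Hc Hm' Hc' Hf Hg HC HC' Hh Hconj Cx0 HDx0
           HF HFfull HG HGfull Hdel Hsh Hchaos).
Qed.
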